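(* For every pair of integers $r$ and $k$ with $r\ge 2$, $k$ positive, $r+k\equiv 0\pmod 2$ and $k\le r$, there exist infinitely many triples $(G,P,d)$ such that (1) $G$ is a graph with $\chi(G)\le r$, (2) $P\subset V(G)$ and $|\mathcal{D}_G(P,2)|=2(r+k-1)$, (3) $d\colon P\to[r+k]$ is a precoloring of $P$ in $G$, and (4) $d$ cannot be extended to a $\frac{3r+k}{2}$-coloring of $G$.
   Context: For a graph $G$, $P\subset V(G)$ and a positive integer $k$, $\mathcal{D}_G(P,k)=\{\{x,y\}\subset P: x\ne y,\ d_G(x,y)\le k\}$, where $d_G$ is the distance in $G$. $[m]=\{1,\dots,m\}$. A precoloring of $P$ in $G$ is a proper coloring of $G[P]$; an $m$-coloring of $G$ is a proper coloring using at most $m$ colors; $d$ is extended by a coloring $f$ of $G$ if $f(v)=d(v)$ for all $v\in P$. *)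

From mathcomp Require Import all_boot.
Set Implicit Arguments. Unset Strict Implicit. Unset Printing Implicit Defensive.

Definition simple_graph (T : finType) (e : rel T) : Prop :=
  symmetric e /\ irreflexive e.

Definition dist_le (T : finType) (e : rel T) (x y : T) (k : nat) : bool :=
  [exists j : 'I_k.+1, exists s : j.-tuple T, path e x s && (last x s == y)].

Definition DG (T : finType) (e : rel T) (P : {set T}) (k : nat) : {set {set T}} :=
  [set S : {set T} | [exists x, exists y,
     [&& x \in P, y \in P, x != y, S == [set x; y] &
         dist_le e x y k]]].

Definition m_coloring (T : finType) (e : rel T) (m : nat) (f : T -> nat) : Prop :=
  (forall v, 1 <= f v <= m) /\ (forall x y, e x y -> f x != f y).

Definition chi_le (T : finType) (e : rel T) (r : nat) : Prop :=
  exists f : T -> nat, m_coloring e r f.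

(* d is a precoloring of P in G with colors in [m]: a proper coloring of G[P]
   with values in [m] (values of d outside P are irrelevant). *)
Definition precoloring (T : finType) (e : rel T) (P : {set T}) (m : nat)
  (d : T -> nat) : Prop :=
  (forall v, v \in P -> 1 <= d v <= m) /\
  (forall x y, x \in P -> y \in P -> e x y -> d x != d y).

Definition extends (T : finType) (P : {set T}) (d f : T -> nat) : Prop :=
  forall v, v \in P -> f v = d v.

From mathcomp Require Import all_boot zify.
Set Implicit Arguments. Unset Strict Implicit. Unset Printing Implicit Defensive.

(* Let Q = r + k - 1 and m = (3r + k) / 2. Take the complete r-partite graph
   on r rows of Q vertices each, and precolored vertices s (color 1) and (b, s)
   (color b + 2) for b < Q, s = true attached to the last row and s = false to
   the others; the grid vertex (i, b) sees s and (b, s) for its own s. Coloring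
   by rows and giving the s = false vertices color r shows chi <= r, and the
   only precolored pairs at distance 2 are the 2Q pairs {s, (b, s)}.
   In an extension, row colors are pairwise disjoint, lie in [2, m], and avoid
   b + 2 at column b, so a row using only colors <= Q + 1 uses at least two.
   Weighting each color > Q + 1 by 2 and the others by 1, every row needs
   weight 2, but [2, m] has total weight 2m - Q - 2 < 2r. *)

Section RowColorings.

Variables (R Q m : nat) (g : 'I_R -> 'I_Q -> nat).
Hypothesis Q_gt0 : 0 < Q.
Hypothesis g_range : forall i b, 2 <= g i b <= m.
Hypothesis g_avoid : forall i b, g i b != b + 2.
Hypothesis g_rows_disjoint : forall i j b c, i != j -> g i b != g j c.
Hypothesis few_colors : 2 * m <= 2 * R + Q + 1.
Hypothesis enough_colors : Q.+1 <= m.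

Let q0 : 'I_Q := Ordinal Q_gt0.

Definition first_color i := g i q0.

(* The column whose forbidden color is the first color of the row. *)
Definition second_color i := g i (insubd q0 (first_color i - 2)).

Lemma second_color_neq i : first_color i <= Q.+1 -> second_color i != first_color i.
Proof.
move=> small; rewrite /second_color.
have := g_avoid i (insubd q0 (first_color i - 2)); rewrite val_insubd.
have := g_range i q0; have := g_avoid i q0; rewrite /first_color /= in small *.
by case: ifP => ?; lia.
Qed.

(* Slot [Q + 2 (c - Q - 2) + bit] is one half of a big color c > Q + 1;
   slot [c - 2] is a small color c. *)
Definition row_slot (x y : nat) (bit : bool) : nat :=
  if Q.+1 < x then Q + 2 * (x - Q - 2) + bit
  else if Q.+1 < y then Q + 2 * (y - Q - 2) + bit
  else if bit then y - 2 else x - 2.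

Lemma first_color_range i : 2 <= first_color i <= m.
Proof. exact: g_range. Qed.

Lemma second_color_range i : 2 <= second_color i <= m.
Proof. exact: g_range. Qed.

Lemma row_colors_disjoint i j : i != j ->
  [/\ first_color i != first_color j, first_color i != second_color j,
      second_color i != first_color j & second_color i != second_color j].
Proof. by move=> ij; split; apply: g_rows_disjoint. Qed.

Lemma row_slot_lt i bit :
  row_slot (first_color i) (second_color i) bit < 2 * R - 1.
Proof.
have := first_color_range i; have := second_color_range i; rewrite /row_slot.
by case: bit => /= ? ?; repeat case: ifP => ?; lia.
Qed.

Lemma row_slot_inj i j bi bj :
  row_slot (first_color i) (second_color i) bi =
  row_slot (first_color j) (second_color j) bj -> (i, bi) = (j, bj).
Proof.
have := first_color_range i; have := second_color_range i.
have := first_color_range j; have := second_color_range j.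
rewrite /row_slot => ? ? ? ?.
have [<- same_slot|/row_colors_disjoint [? ? ? ?]] := eqVneq i j.
  congr pair; have := @second_color_neq i; move: same_slot.
  by case: bi; case: bj => //=; repeat case: ifP => ?; lia.
by case: bi; case: bj => /=; repeat case: ifP => ?; lia.
Qed.

Lemma row_colorings_pigeonhole : 0 < R -> False.
Proof.
move=> R_gt0.
pose slot (p : 'I_R * bool) : 'I_(2 * R - 1) := Ordinal (row_slot_lt p.1 p.2).
have slot_inj : injective slot.
  by move=> [i bi] [j bj] /(congr1 val) /row_slot_inj.
have := leq_card slot slot_inj.
by rewrite card_prod card_bool !card_ord; lia.
Qed.

End RowColorings.

Lemma dist_le2P (T : finType) (e : rel T) x y : dist_le e x y 2 ->
  [\/ x = y, e x y | exists z, e x z && e z y].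
Proof.
move=> /existsP [j /existsP [s /andP [walk /eqP end_y]]].
have := size_tuple s; have := ltn_ord j.
move: walk end_y; case: (tval s) => [|z [|w [|u rest]]] /=.
- by constructor 1.
- by move=> /andP [exz _] <-; constructor 2.
- by move=> /andP [exz /andP [ezw _]] <-; constructor 3; exists z; rewrite exz ezw.
- by move=> *; lia.
Qed.

Section Construction.

Variables (R Q N : nat).

Definition last_row (i : 'I_R) : bool := i.+1 == R.

(* Grid, precolored vertices [inl s] and [inr (b, s)], N isolated vertices. *)
Definition vertex : finType :=
  ((('I_R * 'I_Q) + (bool + ('I_Q * bool))) + 'I_N)%type.

Definition grid_precolored_adj (x : 'I_R * 'I_Q) (p : bool + ('I_Q * bool)) : bool :=
  match p with
  | inl s => s == last_row x.1
  | inr (b, s) => (x.2 == b) && (s == last_row x.1)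
  end.

Definition adj (u v : vertex) : bool :=
  match u, v with
  | inl (inl x), inl (inl y) => x.1 != y.1
  | inl (inl x), inl (inr p) | inl (inr p), inl (inl x) => grid_precolored_adj x p
  | _, _ => false
  end.

Definition precolored : {set vertex} :=
  [set v : vertex | if v is inl (inr _) then true else false].

Definition precolor (v : vertex) : nat :=
  if v is inl (inr (inr (b, _))) then b + 2 else 1.

Definition row_coloring (v : vertex) : nat :=
  match v with
  | inl (inl x) => x.1 + 1
  | inl (inr (inl s)) | inl (inr (inr (_, s))) => if s then 1 else R
  | _ => 1
  end.

Lemma card_vertex : #|vertex| = R * Q + (2 + Q * 2) + N.
Proof. by rewrite !card_sum !card_prod card_bool !card_ord. Qed.

Lemma adj_simple : simple_graph adj.
Proof.
split.
  by move=> [[[i b]|p]|n] [[[j c]|p']|n'] //=; rewrite eq_sym.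
by move=> [[[i b]|p]|n] //=; rewrite eqxx.
Qed.

Lemma row_coloring_proper : 2 <= R -> m_coloring adj R row_coloring.
Proof.
move=> R_ge2; split.
  move=> [[[i b]|[s|[c s]]]|n] /=; try case: s; try lia.
  by have := ltn_ord i; lia.
have grid_side x p : grid_precolored_adj x p ->
    row_coloring (inl (inl x)) != row_coloring (inl (inr p)).
  case: x => i b; case: p => [s|[c s]] /=; rewrite /last_row;
  [move=> /eqP -> | move=> /andP [_ /eqP ->]];
  by have := ltn_ord i; case: (boolP (i.+1 == R)) => /eqP ? /=; lia.
move=> [[[i b]|p]|n] [[[j c]|p']|n'] //=.
- by apply: contra => /eqP ?; apply/eqP/val_inj => /=; lia.
- exact: grid_side.
- by move=> /grid_side; rewrite eq_sym.
Qed.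

Lemma precolor_precoloring m : Q < m -> precoloring adj precolored m precolor.
Proof.
move=> Q_lt_m; split; last by move=> [[?|?]|?] [[?|?]|?]; rewrite !inE.
by move=> [[?|[s|[c s]]]|?]; rewrite inE //= => _; [|have := ltn_ord c]; lia.
Qed.

Definition close_pair (p : 'I_Q * bool) : {set vertex} :=
  [set inl (inr (inl p.2)); inl (inr (inr p))].

Lemma close_pair_inj : injective close_pair.
Proof.
move=> [c s] [c' s'] /setP /(_ (inl (inr (inr (c, s))))).
by rewrite !inE eqxx /= => /esym/eqP [-> ->].
Qed.

Lemma DG_precolored : 2 <= R ->
  DG adj precolored 2 = [set close_pair p | p : 'I_Q * bool].
Proof.
move=> R_ge2; apply/setP => S; rewrite inE; apply/idP/idP.
- move=> /existsP [x /existsP [y /and5P [Px Py xy /eqP -> /dist_le2P]]].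
  rewrite !inE in Px Py.
  case=> [x_eq_y | exy | [z /andP [exz ezy]]].
  + by move: xy; rewrite x_eq_y eqxx.
  + by move: Px Py exy xy; case: x => [[?|?]|?]; case: y => [[?|?]|?].
  + move: Px Py exz ezy xy; case: x => [[?|px]|?] //; case: y => [[?|py]|?] //.
    case: z => [[w|?]|?] //= _ _.
    case: px => [s|[c s]]; case: py => [s'|[c' s']] /=.
    * by move=> /eqP -> /eqP ->; rewrite eqxx.
    * move=> /eqP -> /andP [/eqP <- /eqP ->] _.
      by apply/imsetP; exists (w.2, last_row w.1).
    * move=> /andP [/eqP <- /eqP ->] /eqP -> _.
      by apply/imsetP; exists (w.2, last_row w.1); rewrite // /close_pair setUC.
    * by move=> /andP [/eqP <- /eqP ->] /andP [/eqP <- /eqP ->]; rewrite eqxx.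
- move=> /imsetP [[c s] _ ->].
  apply/existsP; exists (inl (inr (inl s))).
  apply/existsP; exists (inl (inr (inr (c, s)))).
  rewrite !inE /= eqxx /=.
  apply/existsP; exists (@Ordinal 3 2 erefl); apply/existsP.
  have first_lt : 0 < R by lia.
  have last_lt : R.-1 < R by lia.
  exists [tuple inl (inl (if s then Ordinal last_lt else Ordinal first_lt, c));
                inl (inr (inr (c, s)))].
  by rewrite /= /last_row !eqxx; case: s => /=; rewrite ?eqxx //; apply/eqP; lia.
Qed.

Lemma card_DG_precolored : 2 <= R -> #|DG adj precolored 2| = 2 * Q.
Proof.
move=> R_ge2; rewrite DG_precolored // card_imset; last exact: close_pair_inj.
by rewrite card_prod card_ord card_bool mulnC.
Qed.

Lemma precolor_not_extendable m :
  0 < R -> 0 < Q -> 2 * m <= 2 * R + Q + 1 -> Q.+1 <= m ->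
  ~ exists f, m_coloring adj m f /\ extends precolored precolor f.
Proof.
move=> R_gt0 Q_gt0 few_colors enough_colors [f [[f_range f_proper] f_ext]].
pose g i b := f (inl (inl (i, b))).
apply: (@row_colorings_pigeonhole R Q m g) => //.
- move=> i b; have := f_range (inl (inl (i, b))).
  have := f_proper (inl (inl (i, b))) (inl (inr (inl (last_row i)))).
  rewrite /= eqxx (f_ext (inl (inr (inl (last_row i))))) ?inE //= /g => /(_ isT).
  by move: (f _) => n /eqP ? /andP [? ->]; rewrite andbT; lia.
- move=> i b; have := f_proper (inl (inl (i, b))) (inl (inr (inr (b, last_row i)))).
  by rewrite /= !eqxx (f_ext (inl (inr (inr (b, last_row i))))) ?inE //= => /(_ isT).
- by move=> i j b c ij; exact: (f_proper (inl (inl (i, b))) (inl (inl (j, c)))).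
Qed.

End Construction.

Theorem theorem6 (r k : nat) :
  2 <= r -> 0 < k -> ~~ odd (r + k) -> k <= r ->
  forall N : nat,
  exists (T : finType) (e : rel T) (P : {set T}) (d : T -> nat),
    N <= #|T| /\
      [/\ simple_graph e,
        chi_le e r,
        #|DG e P 2| = 2 * (r + k - 1),
        precoloring e P (r + k) d &
        ~ (exists f : T -> nat, m_coloring e ((3 * r + k) %/ 2) f /\ extends P d f)].
Proof.
move=> r_ge2 k_gt0 even_rk k_le_r N.
have := even_halfK even_rk; move: (_./2) => half_rk rk_double.
exists (vertex r (r + k - 1) N), (@adj _ _ _), (precolored _ _ _), (@precolor _ _ _).
split; first by rewrite card_vertex leq_addl.
split.
- exact: adj_simple.
- by eexists; apply: row_coloring_proper.
- exact: card_DG_precolored.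
- by apply: precolor_precoloring; lia.
- by apply: precolor_not_extendable; lia.
Qed.
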